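(* Let $n=2m+2$, $\omega=\exp(2\pi i/n)$, and let $S$ and $C$ be real $n\times n$ circulant matrices with first rows $(s_1,\ldots,s_n)$ and $(c_1,\ldots,c_n)$ such that $S$, $S+C$ and $S-C$ are entrywise nonnegative. Let $\sigma_1=(\lambda_1,\ldots,\lambda_n)$ and $\sigma_2=(\beta_1,\ldots,\beta_n)$ be their ordered spectra, $\lambda_k=\sum_{j=1}^n s_j\omega^{(k-1)(j-1)}$ and $\beta_k=\sum_{j=1}^n c_j\omega^{(k-1)(j-1)}$ (so $\sigma_1=(\lambda_1,\lambda_2,\lambda_3,\ldots,\overline{\lambda}_3,\overline{\lambda}_2)$ and similarly for $\sigma_2$). Let $t_1,t_2$ be real numbers with $t_1\ge|t_2|$ and fix a sign $\epsilon\in\{+1,-1\}$. Define $$\sigma_{s,t_1}=(\lambda_1+t_1,\lambda_2,\ldots,\lambda_{m+1},\lambda_{m+2}+\epsilon t_1,\lambda_{m+3},\ldots,\lambda_n),$$ $$\sigma_{c,t_2}=(\beta_1+t_2,\beta_2,\ldots,\beta_{m+1},\beta_{m+2}+\epsilon t_2,\beta_{m+3},\ldots,\beta_n).$$ Then there exists a nonnegative permutative $2n\times 2n$ matrix $M$ whose spectrum (counted with multiplicities) is the concatenated list $\sigma_{s,t_1}\cup\sigma_{c,t_2}$.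
   Context: A circulant matrix with first row $(r_1,\ldots,r_n)$ is the matrix whose $i$-th row is the first row cyclically shifted $i-1$ positions to the right. A matrix is permutative if each of its rows is a permutation of its first row (more precisely, it equals $\tau(\mathbf a)$ for some $\mathbf a$ and some $n$-tuple of permutations $\tau$ with $\tau_1=\mathrm{id}$, the $j$-th row being $(a_{\tau_j(1)},\ldots,a_{\tau_j(n)})$). Nonnegative means entrywise nonnegative. *)

From HB Require Import structures.
From mathcomp Require Import all_boot all_order all_algebra all_fingroup.
From mathcomp Require Import all_classical all_reals.
From mathcomp Require Import trigo.
From mathcomp Require Import complex.
Set Implicit Arguments. Unset Strict Implicit. Unset Printing Implicit Defensive.
Import Order.TTheory GRing.Theory Num.Theory.
Local Open Scope ring_scope.

Notation Cx R := (complex.complex R).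

Definition rC {R : realType} (x : R) : Cx R := complex.Complex x 0.

(* circulant matrix with first row r: row i is r shifted cyclically i places
   to the right, i.e. entry (i,j) is r_{(j - i) mod n} (0-based indices). *)
Definition circulant {R : pzRingType} (n : nat) (r : 'I_n.+1 -> R) : 'M[R]_n.+1 :=
  \matrix_(i < n.+1, j < n.+1) r (inZp (j + (n.+1 - i))).

Definition nonneg_mx {R : numDomainType} (p q : nat) (A : 'M[R]_(p, q)) : Prop :=
  forall i j, 0 <= A i j.

Definition permutative {R : pzRingType} (N : nat) (A : 'M[R]_N) : Prop :=
  exists (a : 'I_N -> R) (tau : 'I_N -> 'S_N),
    (forall i0 : 'I_N, val i0 = 0%N -> tau i0 = 1%g) /\
    forall i j, A i j = a (tau i j).

Definition omega {R : realType} (n : nat) : Cx R :=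
  complex.Complex (cos (2 * pi / n%:R)) (sin (2 * pi / n%:R)).

(* k-th eigenvalue (0-based k) of the circulant with first row r:
   lambda_{k+1} = sum_j r_{j+1} omega^(k j) *)
Definition circ_eig {R : realType} (n : nat) (r : 'I_n -> R) (k : 'I_n) : Cx R :=
  \sum_(j < n) rC (r j) * omega n ^+ (k * j).

(* perturbed spectrum sigma_{r,t}: add t at position 1 and eps*t at position
   m+2 (1-based), i.e. at 0-based indices 0 and m+1, with n = 2m+2. *)
Definition pert_spec {R : realType} (m : nat) (r : 'I_(m.*2.+2) -> R)
    (t eps : R) (k : 'I_(m.*2.+2)) : Cx R :=
  circ_eig r k + (if val k == 0%N then rC t else 0)
               + (if val k == m.+1 then rC (eps * t) else 0).

Definition has_spectrum {R : realType} (N : nat) (M : 'M[R]_N)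
    (mu : 'I_N -> Cx R) : Prop :=
  char_poly (map_mx (@rC R) M) = \prod_(k < N) ('X - (mu k)%:P).

From HB Require Import structures.
From mathcomp Require Import all_boot all_order all_algebra all_fingroup.
From mathcomp Require Import all_classical all_reals.
From mathcomp Require Import trigo.
From mathcomp Require Import complex.
From mathcomp Require Import ring lra zify.

(** The vector [pert_vec t eps] has circulant spectrum [t] at index 0 and
  [eps * t] at index [m + 1] (and 0 elsewhere), so [sigma_{s,t1}] and
  [sigma_{c,t2}] are the spectra of the circulants of [s + pert_vec t1 eps] and
  [c + pert_vec t2 eps].  Put [a = (s + c + pert_vec (t1 + t2) eps) / 2] and
  [b = (s - c + pert_vec (t1 - t2) eps) / 2]; both are nonnegative because
  [S +- C >= 0] and [t1 >= |t2|].  The block matrix [[C a, C b], [C b, C a]] is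
  nonnegative and permutative: each row lists every [a j] and every [b j]
  exactly once.  Conjugating it by [[1, 0], [1, 1]] makes it block triangular
  with diagonal blocks [C (a + b) = C (s + pert_vec t1 eps)] and
  [C (a - b) = C (c + pert_vec t2 eps)], and circulants are diagonalised by the
  Fourier matrix. *)

Set Implicit Arguments.
Unset Strict Implicit.
Unset Printing Implicit Defensive.

Import Order.TTheory GRing.Theory Num.Theory.
Local Open Scope ring_scope.

HB.instance Definition _ (R : realType) :=
  GRing.RMorphism.copy (@rC R) (real_complex R).

Lemma dvdn_small (n k : nat) : (k < n)%N -> (n %| k)%N = (k == 0)%N.
Proof. by case: k => [|k] lt_kn; rewrite ?dvdn0 ?gtnNdvd. Qed.

Lemma dvdn_double_addS (m k : nat) : (k < m.*2.+2)%N ->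
  (m.*2.+2 %| k + m.+1)%N = (k == m.+1).
Proof.
move=> lt_k; apply/idP/eqP => [/dvdnP [q def_q]|->]; last first.
  by rewrite addnn doubleS dvdnn.
have : (q < 2)%N by nia.
by case: q def_q => [|[|q]] //; lia.
Qed.

Lemma char_poly_similar (F : fieldType) (n : nat) (A D W : 'M[F]_n) :
  W \in unitmx -> A *m W = W *m D -> char_poly A = char_poly D.
Proof.
move=> Wu AW; pose Wp := map_mx polyC W.
have cpAW : char_poly_mx A *m Wp = Wp *m char_poly_mx D.
  rewrite /char_poly_mx mulmxBl mulmxBr mul_scalar_mx mul_mx_scalar.
  by rewrite /Wp -!map_mxM AW.
have detWp_neq0 : \det Wp != 0.
  by rewrite det_map_mx polyC_eq0 -unitfE -unitmxE.
apply: (mulIf detWp_neq0).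
by rewrite /char_poly -!det_mulmx cpAW !det_mulmx mulrC.
Qed.

Lemma det_block_sym (R : comPzRingType) (n : nat) (P Q : 'M[R]_n) :
  \det (block_mx P Q Q P) = \det (P + Q) * \det (P - Q).
Proof.
pose L : 'M[R]_(n + n) := block_mx 1%:M 0 (- 1%:M) 1%:M.
pose U : 'M[R]_(n + n) := block_mx 1%:M 0 1%:M 1%:M.
have detL : \det L = 1 by rewrite det_lblock det1 mulr1.
have detU : \det U = 1 by rewrite det_lblock det1 mulr1.
have triang : L *m block_mx P Q Q P *m U = block_mx (P + Q) Q 0 (P - Q).
  rewrite !mulmx_block !(mul1mx, mulmx1, mul0mx, mulNmx, mulmx0, addr0, add0r).
  by congr block_mx; rewrite ?addrA ?addrK ?addNr // addrC.
by rewrite -(det_ublock _ Q) -triang !det_mulmx detL detU mul1r mulr1.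
Qed.

Lemma char_poly_block_sym (R : comNzRingType) (n : nat) (A B : 'M[R]_n) :
  char_poly (block_mx A B B A) = char_poly (A + B) * char_poly (A - B).
Proof.
pose Bp := map_mx polyC B.
rewrite /char_poly.
have -> : char_poly_mx (block_mx A B B A) =
    block_mx (char_poly_mx A) (- Bp) (- Bp) (char_poly_mx A).
  by rewrite /char_poly_mx map_block_mx (scalar_mx_block n n) opp_block_mx
    add_block_mx !sub0r.
rewrite det_block_sym; congr (_ * _); congr (\det _); apply/matrixP => i j;
  by rewrite !mxE (rmorphD, rmorphB) /=; ring.
Qed.

Lemma sum_unity_root_expr (F : fieldType) (n : nat) (x : F) : x ^+ n = 1 ->
  \sum_(j < n) x ^+ j = if x == 1 then n%:R else 0.
Proof.
move=> xn1; have [->|x_neq1] := eqVneq x 1.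
  by rewrite (eq_bigr (fun=> 1)) ?sumr_const ?card_ord // => j _; rewrite expr1n.
have : (x - 1) * \sum_(j < n) x ^+ j = 0 by rewrite -subrX1 xn1 subrr.
by move/eqP; rewrite mulf_eq0 subr_eq0 (negbTE x_neq1) => /eqP.
Qed.

Lemma circulantE (R : pzRingType) (n : nat) (r : 'I_n.+1 -> R) i j :
  circulant r i j = r (j - i).
Proof. by rewrite mxE; congr r; apply: val_inj => /=; rewrite modnDmr. Qed.

Lemma map_circulant (R S : pzRingType) (f : R -> S) (n : nat) (r : 'I_n.+1 -> R) :
  map_mx f (circulant r) = circulant (f \o r).
Proof. by apply/matrixP => i j; rewrite !mxE. Qed.

Lemma circulantD (R : pzRingType) (n : nat) (r1 r2 : 'I_n.+1 -> R) :
  circulant r1 + circulant r2 = circulant (fun j => r1 j + r2 j).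
Proof. by apply/matrixP => i j; rewrite !mxE. Qed.

Lemma circulantB (R : pzRingType) (n : nat) (r1 r2 : 'I_n.+1 -> R) :
  circulant r1 - circulant r2 = circulant (fun j => r1 j - r2 j).
Proof. by apply/matrixP => i j; rewrite !mxE. Qed.

Section DiscreteFourier.
Variables (F : fieldType) (n : nat) (w : F).
Hypothesis w_prim : n.+1.-primitive_root w.

Lemma sum_prim_root_expr k :
  \sum_(j < n.+1) (w ^+ k) ^+ j = if (n.+1 %| k)%N then n.+1%:R else 0.
Proof.
rewrite sum_unity_root_expr; first by rewrite -[w ^+ k == 1](prim_order_dvd w_prim).
by rewrite -exprM mulnC exprM (prim_expr_order w_prim) expr1n.
Qed.

Definition dft_mx : 'M[F]_n.+1 := \matrix_(i, k) w ^+ (i * k).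

Definition circ_eigenvalue (r : 'I_n.+1 -> F) (k : 'I_n.+1) : F :=
  \sum_(j < n.+1) r j * w ^+ (k * j).

Lemma dft_mx_unit : dft_mx \in unitmx.
Proof.
have -> : dft_mx = Vandermonde n.+1 (\row_k w ^+ k).
  by apply/matrixP => i k; rewrite !mxE -exprM mulnC.
rewrite unitmxE det_Vandermonde unitfE; apply/prodf_neq0 => i _.
apply/prodf_neq0 => j ltij; rewrite !mxE subr_eq0 (eq_prim_root_expr w_prim).
by rewrite !modn_small // neq_ltn ltij orbT.
Qed.

Lemma circulant_mul_dft r :
  circulant r *m dft_mx = dft_mx *m diag_mx (\row_k circ_eigenvalue r k).
Proof.
apply/matrixP => i k; rewrite mul_mx_diag !mxE /circ_eigenvalue mulr_sumr.
under eq_bigr do rewrite circulantE mxE.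
rewrite (reindex_inj (addIr i)) /=; apply: eq_bigr => l _.
rewrite addrK mulrCA; congr (_ * _).
rewrite -exprD -(prim_expr_mod w_prim) modnMml (prim_expr_mod w_prim).
by rewrite mulnDl addnC [(l * k)%N]mulnC.
Qed.

Lemma char_poly_circulant r :
  char_poly (circulant r) = \prod_(k < n.+1) ('X - (circ_eigenvalue r k)%:P).
Proof.
rewrite (char_poly_similar dft_mx_unit (circulant_mul_dft r)).
by rewrite char_poly_trig ?diag_mx_is_trig //; apply: eq_bigr => k _; rewrite !mxE eqxx.
Qed.

End DiscreteFourier.

Definition cat_fun (T : Type) (m n : nat) (f : 'I_m -> T) (g : 'I_n -> T)
    (k : 'I_(m + n)) : T :=
  match fintype.split k with inl i => f i | inr j => g j end.

Section BlockCirculant.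
Variable n : nat.
Local Notation N := n.+1.

Definition block_circ_index (i j : 'I_(N + N)) : 'I_(N + N) :=
  unsplit (match fintype.split i, fintype.split j with
           | inl k, inl l | inr k, inr l => inl (l - k)
           | inl k, inr l | inr k, inl l => inr (l - k)
           end).

Lemma block_circ_index_inj i : injective (block_circ_index i).
Proof.
pose pos (x : 'I_N + 'I_N) := match x with inl l | inr l => l end.
move=> j j' /(can_inj unsplitK) eq_idx; apply: (can_inj splitK).
case: (fintype.split i) eq_idx => k; case: (fintype.split j) => l;
  by case: (fintype.split j') => l' //= /(congr1 pos) /subIr ->.
Qed.

Lemma block_circ_index0 i : val i = 0%N -> block_circ_index i =1 id.
Proof.
move=> i0 j; have -> : i = lshift N ord0 by apply: val_inj.
rewrite /block_circ_index -[lshift _ _]/(unsplit (inl ord0)) unsplitK.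
by rewrite -[RHS]splitK; case: (fintype.split j) => l; rewrite subr0.
Qed.

Lemma block_circulantE (R : pzRingType) (a b : 'I_N -> R) i j :
  block_mx (circulant a) (circulant b) (circulant b) (circulant a) i j =
  cat_fun a b (block_circ_index i j).
Proof.
rewrite -[in LHS](splitK i) -[in LHS](splitK j) /block_circ_index /cat_fun.
case: (fintype.split i) => k; case: (fintype.split j) => l;
  by rewrite unsplitK /= ?block_mxEul ?block_mxEur ?block_mxEdl ?block_mxEdr
    circulantE.
Qed.

Lemma permutative_block_circulant (R : pzRingType) (a b : 'I_N -> R) :
  permutative (block_mx (circulant a) (circulant b) (circulant b) (circulant a)).
Proof.
exists (cat_fun a b), (fun i => perm (@block_circ_index_inj i)); split.
  by move=> i0 /block_circ_index0 idx0; apply/permP => j; rewrite permE perm1.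
by move=> i j; rewrite permE block_circulantE.
Qed.

Lemma nonneg_block_circulant (R : numDomainType) (a b : 'I_N -> R) :
  (forall j, 0 <= a j) -> (forall j, 0 <= b j) ->
  nonneg_mx (block_mx (circulant a) (circulant b) (circulant b) (circulant a)).
Proof.
move=> a_ge0 b_ge0 i j; rewrite block_circulantE /cat_fun.
by case: (fintype.split _).
Qed.

End BlockCirculant.

Section RealCirculantSpectra.
Variable R : realType.

Lemma has_spectrum_block_sym (n : nat) (A B : 'M[R]_n) mu1 mu2 :
  has_spectrum (A + B) mu1 -> has_spectrum (A - B) mu2 ->
  has_spectrum (block_mx A B B A) (cat_fun mu1 mu2).
Proof.
rewrite /has_spectrum map_block_mx char_poly_block_sym.
rewrite -map_mxD -map_mxB => -> ->; rewrite big_split_ord.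
congr (_ * _); apply: eq_bigr => k _; rewrite /cat_fun.
  by rewrite (unsplitK (inl k)).
by rewrite (unsplitK (inr k)).
Qed.

Lemma omega_expr (n k : nat) : omega n ^+ k =
  Complex (cos (k%:R * (2 * pi / n%:R))) (sin (k%:R * (2 * pi / n%:R))) :> Cx R.
Proof.
elim: k => [|k IHk]; first by rewrite expr0 mul0r cos0 sin0.
rewrite exprS IHk /omega; set a := 2 * pi / n%:R.
rewrite -[Complex _ _ * Complex _ _]/(Complex _ _).
by rewrite -addn1 natrD mulrDl mul1r cosD sinD addrC; congr Complex; ring.
Qed.

Lemma omega_half (m : nat) : omega (m.*2.+2) ^+ m.+1 = -1 :> Cx R.
Proof.
rewrite omega_expr.
have -> : m.+1%:R * (2 * pi / (m.*2.+2)%:R) = pi :> R.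
  have -> : (m.*2.+2)%:R = 2 * m.+1%:R :> R by rewrite -natrM mul2n doubleS.
  by field; rewrite addrC natr1 pnatr_eq0.
by rewrite cospi sinpi; apply/eqP; rewrite eq_complex /= oppr0 !eqxx.
Qed.

Lemma omega_order (n : nat) : (0 < n)%N -> omega n ^+ n = 1 :> Cx R.
Proof.
move=> n_gt0; rewrite omega_expr mulrCA divff ?pnatr_eq0 -?lt0n // mulr1.
by rewrite mulr_natl cos2pi sin2pi.
Qed.

Lemma omega_expr_neq1 (n k : nat) : (0 < k < n)%N -> omega n ^+ k != 1 :> Cx R.
Proof.
case/andP=> k_gt0 lt_kn; rewrite omega_expr; apply/negP => /eqP [cos1 _].
have n_gt0 : (0 < n)%N := ltn_trans k_gt0 lt_kn.
pose y : R := k%:R * pi / n%:R.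
have y_gt0 : 0 < y by rewrite divr_gt0 ?mulr_gt0 ?ltr0n ?pi_gt0.
have y_ltpi : y < pi.
  by rewrite ltr_pdivrMr ?ltr0n // mulrC ltr_pM2l ?pi_gt0 ?ltr_nat.
have cos2y1 : cos (y *+ 2) = 1 by rewrite -cos1 /y -mulr_natr; congr cos; ring.
have /cos1sin0 siny0 : `|cos y| = 1.
  have /eqP : cos y ^+ 2 = 1 by move: cos2y1; rewrite cos_mulr2n; lra.
  by rewrite sqrf_eq1 => /orP [] /eqP ->; rewrite ?normrN normr1.
by move: (@sin_gt0_pi _ y); rewrite y_gt0 y_ltpi siny0 ltxx => /(_ isT).
Qed.

Lemma omega_prim_root (n : nat) : (0 < n)%N -> n.-primitive_root (omega n : Cx R).
Proof.
move=> n_gt0; have [d d_prim d_dvd_n] := prim_order_exists n_gt0 (omega_order n_gt0).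
suff eq_dn : d = n by move: d_prim; rewrite eq_dn.
apply/eqP; rewrite eqn_leq dvdn_leq //= leqNgt; apply/negP => lt_dn.
move: (@omega_expr_neq1 n d); rewrite (prim_order_gt0 d_prim) lt_dn.
by rewrite (prim_expr_order d_prim) eqxx => /(_ isT).
Qed.

Lemma has_spectrum_circulant (n : nat) (r : 'I_n.+1 -> R) (mu : 'I_n.+1 -> Cx R) :
  (forall k, mu k = circ_eig r k) -> has_spectrum (circulant r) mu.
Proof.
move=> mu_eig; rewrite /has_spectrum map_circulant.
rewrite (char_poly_circulant (omega_prim_root (ltn0Sn n))).
by apply: eq_bigr => k _; rewrite mu_eig.
Qed.

(* [pert_vec t eps] is the inverse discrete Fourier transform of
   [t e_0 + eps t e_(m+1)]; the sign [(-1) ^+ j] is [omega ^+ ((m + 1) j)]. *)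
Definition pert_vec {m : nat} (t eps : R) (j : 'I_(m.*2.+2)) : R :=
  t / (m.*2.+2)%:R * (1 + eps * (-1) ^+ j).

Lemma circ_eig_pert_vec (m : nat) (t eps : R) (k : 'I_(m.*2.+2)) :
  circ_eig (pert_vec t eps) k =
  (if val k == 0%N then rC t else 0) + (if val k == m.+1 then rC (eps * t) else 0).
Proof.
pose w : Cx R := omega (m.*2.+2).
have w_prim : (m.*2.+2).-primitive_root w := omega_prim_root (n := m.*2.+2) isT.
pose c := rC (t / (m.*2.+2)%:R).
have expand (j : 'I_(m.*2.+2)) : rC (pert_vec t eps j) * w ^+ (k * j) =
    c * (w ^+ k) ^+ j + c * rC eps * (w ^+ (k + m.+1)) ^+ j.
  have sign_j : rC ((-1) ^+ j) = (w ^+ m.+1) ^+ j.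
    by rewrite omega_half rmorphXn rmorphN1.
  rewrite /pert_vec rmorphM rmorphD rmorph1 (rmorphM _ eps) /= sign_j.
  by rewrite exprD exprMn -!exprM; ring.
have c_n : c * (m.*2.+2)%:R = rC t.
  by rewrite /c -(rmorph_nat (@rC R)) -rmorphM divfK ?pnatr_eq0.
rewrite /circ_eig (eq_bigr _ (fun j _ => expand j)) big_split /= -!mulr_sumr.
rewrite !(sum_prim_root_expr w_prim) dvdn_small // dvdn_double_addS //.
case: eqP => [k0|_]; case: eqP => [km|_].
- by move: km; rewrite k0.
- by rewrite mulr0 !addr0.
- by rewrite mulr0 !add0r mulrAC c_n rmorphM mulrC.
- by rewrite !mulr0 addr0.
Qed.

Lemma pert_spec_circ_eig (m : nat) (r : 'I_(m.*2.+2) -> R) (t eps : R) k :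
  pert_spec r t eps k = circ_eig (fun j => r j + pert_vec t eps j) k.
Proof.
rewrite /pert_spec -addrA -circ_eig_pert_vec /circ_eig -big_split /=.
by apply: eq_bigr => j _; rewrite rmorphD mulrDl.
Qed.

Lemma pert_vec_ge0 (m : nat) (t eps : R) (j : 'I_(m.*2.+2)) :
  0 <= t -> eps = 1 \/ eps = -1 -> 0 <= pert_vec t eps j.
Proof.
move=> t_ge0 eps_sign; rewrite mulr_ge0 ?divr_ge0 //.
by rewrite -signr_odd; case: eps_sign => ->; case: (odd j); rewrite ?expr1 ?expr0; lra.
Qed.

End RealCirculantSpectra.

Theorem theorem9 (R : realType) (m : nat) (s c : 'I_(m.*2.+2) -> R)
    (t1 t2 eps : R) :
  nonneg_mx (circulant s) ->
  nonneg_mx (circulant s + circulant c) ->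
  nonneg_mx (circulant s - circulant c) ->
  `|t2| <= t1 ->
  (eps = 1 \/ eps = -1) ->
  exists M : 'M[R]_(m.*2.+2 + m.*2.+2),
    nonneg_mx M /\ permutative M /\
    has_spectrum M
      (fun k => match fintype.split k with
                | inl k1 => pert_spec s t1 eps k1
                | inr k2 => pert_spec c t2 eps k2
                end).
Proof.
(* The nonnegativity of [S] is implied by that of [S + C] and [S - C]. *)
move=> _ sDc_ge0 sBc_ge0 t2_le_t1 eps_sign.
have [t1Dt2_ge0 t1Bt2_ge0] : 0 <= t1 + t2 /\ 0 <= t1 - t2.
  by move: t2_le_t1; rewrite ler_norml; lra.
pose a j := (s j + c j + pert_vec (t1 + t2) eps j) / 2.
pose b j := (s j - c j + pert_vec (t1 - t2) eps j) / 2.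
have a_ge0 j : 0 <= a j.
  move: (sDc_ge0 ord0 j); rewrite circulantD circulantE subr0 => sDc_ge0_j.
  by apply/divr_ge0/ler0n/addr_ge0/pert_vec_ge0.
have b_ge0 j : 0 <= b j.
  move: (sBc_ge0 ord0 j); rewrite circulantB circulantE subr0 => sBc_ge0_j.
  by apply/divr_ge0/ler0n/addr_ge0/pert_vec_ge0.
exists (block_mx (circulant a) (circulant b) (circulant b) (circulant a)).
split; first exact: nonneg_block_circulant.
split; first exact: permutative_block_circulant.
apply: has_spectrum_block_sym; rewrite (circulantD, circulantB);
  apply: has_spectrum_circulant => k; rewrite pert_spec_circ_eig;
  apply: eq_bigr => j _; congr (rC _ * _); rewrite /a /b /pert_vec;
  by field; rewrite -natrD pnatr_eq0.
Qed.
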